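(* Let $d$ be a positive integer. For every point $z\in\mathbb{P}^d_\circ$ there exist a set $\mathcal{K}$ of $d$ points of $\mathbb{P}^d_\circ$, all of $1$-norm $\|z\|_1$, and a partition of $\mathcal{K}$ into $d/|C\cdot z|$ subsets, each of cardinality $|C\cdot z|$, such that every subset $\mathcal{L}$ of this partition satisfies $$\kappa(C\cdot z)=\sum_{x\in\mathcal{L}}|x_i|\quad\text{for every } i\in\{1,\dots,d\},$$ and, for each such $\mathcal{L}$, there exists a point of $\mathbb{P}^d_\circ$ whose orbit under $C$ contains $\mathcal{L}$.
   Context: A point of $\mathbb{Z}^d$ is primitive if its coordinates are relatively prime; $\mathbb{P}^d_\circ$ denotes the set of primitive points of $\mathbb{Z}^d$ whose first non-zero coordinate is positive. For a finite $\mathcal{X}\subset\mathbb{R}^d$, $\kappa(\mathcal{X})=\max_{1\le i\le d}\sum_{x\in\mathcal{X}}|x_i|$. Let $\sigma:\mathbb{R}^d\to\mathbb{R}^d$ be the cyclic coordinate shift $\sigma(x_1,\dots,x_d)=(x_d,x_1,\dots,x_{d-1})$, and let $\tau(x)=\sigma(x)$ if $x_d\ge 0$ and $\tau(x)=-\sigma(x)$ otherwise. $C$ is the cyclic group (of order $d$) generated by $\tau$, and $C\cdot z=\{g(z):g\in C\}$ is the orbit of $z$; it is a subset of $\mathbb{P}^d_\circ$ when $z\in\mathbb{P}^d_\circ$. *)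

From HB Require Import structures.
From mathcomp Require Import all_boot all_order all_algebra.
From mathcomp Require Import finmap.
Set Implicit Arguments. Unset Strict Implicit. Unset Printing Implicit Defensive.
Import Order.TTheory GRing.Theory Num.Theory.
Local Open Scope fset_scope.

(* Points of Z^d, coordinates indexed by 'I_d (coordinate i+1 of the paper
   is index i here). *)
Definition pt (d : nat) := {ffun 'I_d -> int}.

Definition primitive d (x : pt d) : bool :=
  (\big[gcdn/0%N]_(i < d) absz (x i)) == 1%N.

Definition first_nz_pos d (x : pt d) : bool :=
  [exists i : 'I_d, (0 < x i)%R && [forall j : 'I_d, (j < i)%N ==> (x j == 0%R)]].

Definition inP d (x : pt d) : bool := primitive x && first_nz_pos x.

Definition norm1 d (x : pt d) : nat := \sum_(i < d) absz (x i).

Definition sigma d (x : pt d) : pt d := [ffun i : 'I_d => x (ord_pred i)].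

(* tau(x) = sigma(x) if x_d >= 0, -sigma(x) otherwise *)
Definition tau d (x : pt d) : pt d :=
  if [forall i : 'I_d, (i.+1 == d) ==> (0 <= x i)%R] then sigma x
  else [ffun i => - sigma x i]%R.

(* orbit C.z = { tau^k z : 0 <= k < d } (C cyclic of order d generated by tau) *)
Definition Corbit d (z : pt d) : {fset pt d} :=
  [fset iter k (@tau d) z | k in iota 0 d].

Definition kappa d (X : {fset pt d}) : nat :=
  \max_(i < d) \sum_(x <- X) absz (x i).

(* Let p = #|C.z|.  Then tau^p z = z, so |z| is invariant under the cyclic shift
   by p, and all windows of p cyclically consecutive coordinates of |z| have the
   same sum; this common value is every column sum of C.z, hence kappa(C.z).  It
   therefore suffices to find r = d/p seeds y_j in P^d_o with |y_j| = |z| such that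
   the d points tau^k y_j (j < r, k < p) are distinct: the blocks
   {tau^k y_j | k < p} then form the required partition, each inside the orbit of
   its seed.  If p = d, the single seed z works.  Otherwise the coordinate t = i0 - p
   of z, where i0 is the first nonzero one, is nonzero as well.  If z has a third
   nonzero coordinate, negating |z| at t gives a point y with one negative
   coordinate while -y has at least two, so y has an orbit of length d and the
   seeds tau^(jp) y work.  If i0 and t are the only nonzero coordinates, then
   d = 2p and the two seeds are |z| and |z| negated at t. *)

From HB Require Import structures.
From mathcomp Require Import all_boot all_order all_algebra.
From mathcomp Require Import finmap.
From mathcomp Require Import zify.
Set Implicit Arguments. Unset Strict Implicit. Unset Printing Implicit Defensive.
Import Order.TTheory GRing.Theory Num.Theory.

Section CyclicShift.
Variable d : nat.
Implicit Types (i j : 'I_d) (k m : nat).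

Definition ord_predn k i : 'I_d := iter k (@ord_pred d) i.
Definition ordSn k i : 'I_d := iter k (@ordS d) i.

Lemma ordSn_val k i : val (ordSn k i) = (i + k) %% d.
Proof.
elim: k => [|k IHk] /=; first by rewrite addn0 modn_small.
by rewrite IHk -addn1 modnDml addn1 addnS.
Qed.

Lemma ord_prednK k : cancel (ord_predn k) (ordSn k).
Proof.
by elim: k => // k IHk i; rewrite /ordSn iterSr /ord_predn iterS ord_predK; apply: IHk.
Qed.

Lemma ordSnK k : cancel (ordSn k) (ord_predn k).
Proof.
by elim: k => // k IHk i; rewrite /ord_predn iterSr /ordSn iterS ordSK; apply: IHk.
Qed.

Lemma ord_predn_inj k : injective (ord_predn k).
Proof. exact: can_inj (ord_prednK k). Qed.

Lemma ord_prednD m k i : ord_predn (m + k) i = ord_predn m (ord_predn k i).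
Proof. exact: iterD. Qed.

Lemma ord_prednn i : ord_predn d i = i.
Proof.
apply: (can_inj (ordSnK d)); rewrite ord_prednK; apply: val_inj.
by rewrite ordSn_val modnDr modn_small.
Qed.

Lemma ord_predn_onto i j : exists k, ord_predn k i = j.
Proof.
exists (i + d - j); apply: (can_inj (ordSnK (i + d - j))).
rewrite ord_prednK; apply: val_inj; rewrite ordSn_val.
have lt_jd := ltn_ord j; have lt_id := ltn_ord i.
by rewrite subnKC ?modnDr ?modn_small //; lia.
Qed.

Lemma ord_predn_eq k m i : k < d -> m < d -> ord_predn k i = ord_predn m i -> k = m.
Proof.
wlog le_km : k m / k <= m => [hwlog|] lt_kd lt_md.
  by case/orP: (leq_total k m) => ? E; [|symmetry]; apply: hwlog => //; rewrite E.
rewrite -(subnK le_km) ord_prednD; set j := ord_predn k i.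
move/(congr1 (ordSn (m - k))); rewrite ord_prednK => /(congr1 val); rewrite ordSn_val /=.
have lt_jd := ltn_ord j.
case: (ltnP (j + (m - k)) d) => [?|le_dj]; first by rewrite modn_small //; lia.
by rewrite -(subnK le_dj) modnDr modn_small; lia.
Qed.

Lemma ord_predn_neq k i : 0 < k < d -> ord_predn k i != i.
Proof.
case/andP=> k_gt0 lt_kd; apply/eqP => /(ord_predn_eq lt_kd (ltn_trans k_gt0 lt_kd)) k0.
by rewrite k0 in k_gt0.
Qed.

End CyclicShift.

Lemma sum_ord_shift (F : nat -> nat) n :
  F n = F 0 -> \sum_(k < n) F k.+1 = \sum_(k < n) F k.
Proof.
move=> Fn; apply: (@addnI (F 0)).
rewrite -(big_mkord xpredT F) -(big_mkord xpredT (fun k => F k.+1)).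
by rewrite -big_nat_recl // big_nat_recr //= Fn addnC.
Qed.

Section MinimalPeriod.
Variables (T : choiceType) (f : T -> T) (x : T).

Lemma iter_period_inj p : iter p f x = x ->
    (forall e, 0 < e < p -> iter e f x != x) ->
  forall k m, k < p -> m < p -> iter k f x = iter m f x -> k = m.
Proof.
move=> fp_x p_min; suff le_inj k m : k <= m -> m < p -> iter k f x = iter m f x -> k = m.
  move=> k m lt_kp lt_mp E; case/orP: (leq_total k m) => le_km; first exact: le_inj.
  by apply/esym/le_inj.
move=> le_km lt_mp E; apply/eqP; rewrite eqn_leq le_km leqNgt /=; apply/negP => lt_km.
suff: 0 < k + (p - m) < p.
  by move/p_min; rewrite addnC iterD E -iterD subnK ?fp_x ?eqxx // ltnW.
by apply/andP; split; lia.
Qed.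

Lemma iter_min_period n : 0 < n -> iter n f x = x ->
  exists2 p, p %| n & [/\ 0 < p, iter p f x = x,
    forall e, 0 < e < p -> iter e f x != x &
    [fset iter k f x | k in iota 0 n]%fset = [fset iter k f x | k in iota 0 p]%fset].
Proof.
move=> n_gt0 fn_x; have fn_ex : exists p, (0 < p) && (iter p f x == x).
  by exists n; rewrite n_gt0 fn_x eqxx.
case: (ex_minnP fn_ex) => p /andP[p_gt0 /eqP fp_x] p_le.
have p_min e : 0 < e < p -> iter e f x != x.
  by case/andP=> e_gt0; apply: contraTneq => fe_x; rewrite -leqNgt p_le // e_gt0 fe_x /=.
have iter_mod k : iter k f x = iter (k %% p) f x.
  rewrite {1}(divn_eq k p) addnC iterD; congr (iter _ f _).
  by elim: (k %/ p) => // q IHq; rewrite mulSn iterD IHq fp_x.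
exists p; last split => //.
  apply: contraTT (introT eqP fn_x) => n_mod_p.
  by rewrite iter_mod; apply: p_min; rewrite lt0n n_mod_p ltn_pmod.
apply/fsetP => y; apply/imfsetP/imfsetP => [] [k]; rewrite !mem_iota !add0n => lt_k ->.
  by exists (k %% p); rewrite ?mem_iota ?ltn_pmod.
by exists k; rewrite ?mem_iota //; apply: leq_trans lt_k (p_le _ _); rewrite n_gt0 fn_x eqxx.
Qed.

End MinimalPeriod.

Section Grid.
Local Open Scope fset_scope.
Variables (T : choiceType) (I J : finType) (x : I * J -> T).
Hypothesis x_inj : injective x.

Definition grid : {fset T} := [fset x ij | ij : (I * J)%type].
Definition grid_row (i : I) : {fset T} := [fset x (i, j) | j : J].
Definition grid_rows : {fset {fset T}} := [fset grid_row i | i : I].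

Lemma grid_row_inj i : injective (fun j => x (i, j)).
Proof. by move=> j j' /x_inj[]. Qed.

Lemma card_grid : #|` grid| = #|I| * #|J|.
Proof. by rewrite card_imfset //= -card_prod cardE. Qed.

Lemma card_grid_row i : #|` grid_row i| = #|J|.
Proof. by rewrite card_imfset //= ?cardE //; apply: grid_row_inj. Qed.

Lemma big_grid_row (R : Type) (idx : R) (op : Monoid.com_law idx) (F : T -> R) i :
  \big[op/idx]_(w <- grid_row i) F w = \big[op/idx]_j F (x (i, j)).
Proof. by rewrite big_imfset /= ?big_enum // => j j' _ _ /grid_row_inj. Qed.

Lemma mem_grid w : w \in grid <-> exists2 L, L \in grid_rows & w \in L.
Proof.
split=> [/imfsetP[[i j] _ ->] | [L /imfsetP[i _ ->] /imfsetP[j _ ->]]].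
  by exists (grid_row i); apply/imfsetP; [exists i | exists j].
by apply/imfsetP; exists (i, j).
Qed.

Lemma grid_rows_sub L : L \in grid_rows -> L `<=` grid.
Proof. by move=> L_row; apply/fsubsetP => w w_L; apply/mem_grid; exists L. Qed.

Lemma grid_rows_disjoint L1 L2 :
  L1 \in grid_rows -> L2 \in grid_rows -> L1 != L2 -> L1 `&` L2 = fset0.
Proof.
move=> /imfsetP[i _ ->] /imfsetP[i' _ ->]; apply: contraNeq => /fset0Pn[w].
by rewrite in_fsetI => /andP[/imfsetP[j _ ->] /imfsetP[j' _ /x_inj[-> _]]].
Qed.

Lemma card_grid_rows (j0 : J) : #|` grid_rows| = #|I|.
Proof.
rewrite card_imfset //= ?cardE // => i i' row_ii'.
have /imfsetP[j _ /x_inj[]] : x (i, j0) \in grid_row i'.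
  by rewrite -row_ii'; apply/imfsetP; exists j0.
by [].
Qed.

End Grid.

Section SignedShift.
Variable d : nat.
Implicit Types (x y : pt d) (i j : 'I_d) (k : nat).
Local Open Scope ring_scope.

Lemma tauE x : exists b : bool, forall i, tau x i = (-1) ^+ b * x (ord_pred i).
Proof.
rewrite /tau; case: ifP => _; [exists false | exists true] => i.
  by rewrite ffunE mul1r.
by rewrite !ffunE mulN1r.
Qed.

Lemma tau_iterE k x :
  exists b : bool, forall i, iter k (@tau d) x i = (-1) ^+ b * x (ord_predn k i).
Proof.
elim: k => [|k [b IHk]]; first by exists false => i; rewrite mul1r.
have [c tau_c] := tauE (iter k (@tau d) x).
by exists (c (+) b) => i; rewrite iterS tau_c IHk signr_addb mulrA /ord_predn iterSr.
Qed.

Lemma abs_tau_iter k x i : `|iter k (@tau d) x i|%N = `|x (ord_predn k i)|%N.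
Proof. by have [b ->] := tau_iterE k x; rewrite abszMsign. Qed.

Lemma primitive_perm (s : 'I_d -> 'I_d) x y :
  injective s -> (forall i, `|y i|%N = `|x (s i)|%N) -> primitive y = primitive x.
Proof.
move=> s_inj yx; rewrite /primitive [in RHS](reindex_inj s_inj).
by congr (_ == _); apply: eq_bigr => i _.
Qed.

Lemma norm1_perm (s : 'I_d -> 'I_d) x y :
  injective s -> (forall i, `|y i|%N = `|x (s i)|%N) -> norm1 y = norm1 x.
Proof. by move=> s_inj yx; rewrite /norm1 [in RHS](reindex_inj s_inj); apply: eq_bigr. Qed.

Lemma first_nz_pos_signE (b : bool) x y :
  first_nz_pos x -> first_nz_pos y -> (forall i, y i = (-1) ^+ b * x i) -> y = x.
Proof.
move=> /existsP[i /andP[x_i /forallP x_lt_i]] /existsP[j /andP[y_j /forallP y_lt_j]].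
case: b => yx; last by apply/ffunP => i'; rewrite yx mul1r.
have {}yx i' : y i' = - x i' by rewrite yx mulN1r.
case: (ltngtP i j) => [lt_ij | lt_ji | /val_inj eq_ij].
- by move: (implyP (y_lt_j i) lt_ij); rewrite yx oppr_eq0 gt_eqF.
- by move: (implyP (x_lt_i j) lt_ji) y_j => /eqP; rewrite yx => ->; rewrite oppr0 ltxx.
- by move: y_j; rewrite yx -eq_ij oppr_gt0 => /(lt_trans x_i); rewrite ltxx.
Qed.

Lemma first_nz_pos_tau x : first_nz_pos x -> first_nz_pos (tau x).
Proof.
case/existsP=> i /andP[x_i /forallP x_lt_i].
have d_gt0 : (0 < d)%N by apply: leq_ltn_trans (ltn_ord i).
pose o := Ordinal d_gt0; pose l := ord_pred o.
have l_val : val l = d.-1 by rewrite /= add0n modn_small //; lia.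
have tau_cond : [forall j : 'I_d, (j.+1 == d) ==> (0 <= x j)] = (0 <= x l).
  apply/forallP/idP => [/(_ l)|x_l j]; first by rewrite l_val prednK ?eqxx.
  apply/implyP => /eqP j_last; suff -> : j = l by [].
  by apply: val_inj; rewrite l_val /=; lia.
have o_first (y : pt d) : 0 < y o -> first_nz_pos y.
  by move=> y_o; apply/existsP; exists o; rewrite y_o; apply/forallP.
rewrite /tau tau_cond; have [x_l_neg | x_l_pos | x_l0] := ltrgtP (x l) 0.
- by apply: o_first; rewrite !ffunE oppr_gt0.
- by apply: o_first; rewrite ffunE.
have i_last : (i.+1 < d)%N.
  have : i != l by apply: contraTneq x_i => ->; rewrite x_l0 ltxx.
  by rewrite -val_eqE l_val /=; have := ltn_ord i; lia.
apply/existsP; exists (ordS i); rewrite ffunE ordSK x_i /=.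
apply/forallP => j; apply/implyP; rewrite /= modn_small // ltnS => j_le_i.
rewrite ffunE; case: (posnP j) => [j0 | j_gt0].
  have -> : j = o by apply: val_inj.
  exact/eqP.
apply: (implyP (x_lt_i _)) => /=; have -> : (j + d).-1 = j.-1 + d by lia.
by rewrite modnDr modn_small; lia.
Qed.

Lemma inP_tau x : inP x -> inP (tau x).
Proof.
case/andP=> x_prim x_fnz; apply/andP; split; last exact: first_nz_pos_tau.
by rewrite (primitive_perm (@ord_pred_inj d) (x := x)) // => i; apply: (abs_tau_iter 1).
Qed.

Lemma inP_iter_tau k x : inP x -> inP (iter k (@tau d) x).
Proof. by move=> x_inP; elim: k => //= k; apply: inP_tau. Qed.

Lemma tau_inj x y : inP x -> inP y -> tau x = tau y -> x = y.
Proof.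
move=> /andP[_ x_fnz] /andP[_ y_fnz] /(congr1 (fun w : pt d => w (ordS _))) tau_xy.
have [b tau_b] := tauE x; have [c tau_c] := tauE y.
apply: (first_nz_pos_signE (b := b (+) c) y_fnz x_fnz) => i.
move: (tau_xy i); rewrite /= tau_b tau_c ordSK => /(congr1 ( *%R ((-1) ^+ b))).
by rewrite signrMK mulrA -signr_addb.
Qed.

Lemma iter_tau_inj k x y :
  inP x -> inP y -> iter k (@tau d) x = iter k (@tau d) y -> x = y.
Proof.
move=> x_inP y_inP; elim: k => // k IHk /=.
by move/(tau_inj (inP_iter_tau k x_inP) (inP_iter_tau k y_inP)).
Qed.

Lemma iter_tau_cancel k m x y : inP x -> inP y -> (k <= m)%N ->
  iter k (@tau d) x = iter m (@tau d) y -> x = iter (m - k) (@tau d) y.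
Proof.
move=> x_inP y_inP le_km; rewrite -(subnKC le_km) iterD addKn.
by apply: iter_tau_inj => //; apply: inP_iter_tau.
Qed.

Lemma iter_tau_d x : inP x -> iter d (@tau d) x = x.
Proof.
move=> x_inP; have [b tau_b] := tau_iterE d x.
have /andP[_ x_fnz] := x_inP; have /andP[_ tx_fnz] := inP_iter_tau d x_inP.
by apply: (first_nz_pos_signE (b := b) x_fnz tx_fnz) => i; rewrite tau_b ord_prednn.
Qed.

Lemma iter_tau_seeds_inj r p (Y : 'I_r -> pt d) : (forall j : 'I_r, inP (Y j)) ->
    (forall (j j' : 'I_r) e, (e < p)%N -> Y j = iter e (@tau d) (Y j') -> j = j' /\ e = 0%N) ->
  injective (fun jk : 'I_r * 'I_p => iter jk.2 (@tau d) (Y jk.1)).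
Proof.
move=> Y_inP Y_sep; suff le_inj (jk jk' : 'I_r * 'I_p) : (jk.2 <= jk'.2)%N ->
    iter jk.2 (@tau d) (Y jk.1) = iter jk'.2 (@tau d) (Y jk'.1) -> jk = jk'.
  move=> jk jk' E; case/orP: (leq_total jk.2 jk'.2) => le_jk; first exact: le_inj le_jk E.
  exact/esym/(le_inj _ _ le_jk)/esym.
case: jk jk' => [j k] [j' k'] /= le_kk' /(iter_tau_cancel (Y_inP j) (Y_inP j') le_kk').
case/Y_sep => [|-> /eqP]; first by rewrite (leq_ltn_trans (leq_subr _ _)).
by rewrite subn_eq0 => le_k'k; congr pair; apply/val_inj/anti_leq; rewrite le_kk'.
Qed.

End SignedShift.

Section BlockSeeds.
Variables (d p r : nat) (z : pt d).
Hypotheses (z_inP : inP z) (p_gt0 : 0 < p) (pr_d : p * r = d).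
Hypothesis z_p : iter p (@tau d) z = z.
Hypothesis p_min : forall e, 0 < e < p -> iter e (@tau d) z != z.
Local Open Scope ring_scope.

Definition block_seeds (Y : 'I_r -> pt d) : Prop :=
  [/\ forall j, inP (Y j), forall j i, `|Y j i|%N = `|z i|%N &
      forall j j' e, (e < p)%N -> Y j = iter e (@tau d) (Y j') -> j = j' /\ e = 0%N].

Lemma abs_z_predn i : `|z (ord_predn p i)|%N = `|z i|%N.
Proof. by rewrite -abs_tau_iter z_p. Qed.

Lemma abs_z_period k i : `|z (ord_predn (k * p) i)|%N = `|z i|%N.
Proof. by elim: k => // k IHk; rewrite mulSn ord_prednD abs_z_predn. Qed.

Definition col_sum i := (\sum_(k < p) `|z (ord_predn k i)|)%N.

Lemma col_sum_pred i : col_sum (ord_pred i) = col_sum i.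
Proof.
rewrite /col_sum -(@sum_ord_shift (fun k => `|z (ord_predn k i)|%N)) /=.
  by apply: eq_bigr => k _; rewrite /ord_predn -iterSr iterS.
exact: abs_z_predn.
Qed.

Lemma col_sum_const i j : col_sum i = col_sum j.
Proof.
have [k <-] := ord_predn_onto i j; elim: k => // k IHk.
by rewrite /ord_predn iterS col_sum_pred.
Qed.

Lemma full_orbit_seeds y : inP y -> (forall i, `|y i|%N = `|z i|%N) ->
    (forall e, (0 < e < d)%N -> iter e (@tau d) y != y) ->
  exists Y, block_seeds Y.
Proof.
move=> y_inP y_abs y_full; exists (fun j => iter (j * p) (@tau d) y); split.
- by move=> j; apply: inP_iter_tau.
- by move=> j i; rewrite abs_tau_iter y_abs abs_z_period.
have lt_d (k : 'I_r) m : (m < p -> m + k * p < d)%N.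
  by rewrite -pr_d => lt_mp; have := ltn_ord k; nia.
move=> j j' e lt_ep; rewrite -iterD => /(iter_period_inj (iter_tau_d y_inP) y_full).
move=> /(_ (lt_d j 0%N p_gt0) (lt_d j' e lt_ep)) /= E.
have e0 : e = 0%N.
  by move: (congr1 (modn^~ p) E); rewrite /= modnMl addnC modnMDl modn_small.
by split=> //; apply/val_inj/eqP; rewrite -(eqn_pmul2r p_gt0) E e0.
Qed.

Definition signed (F : pred 'I_d) : pt d := [ffun i => (-1) ^+ F i * `|z i|%:Z].

Lemma abs_signed F i : `|signed F i|%N = `|z i|%N.
Proof. by rewrite ffunE abszMsign. Qed.

Lemma inP_signed F i0 : 0 < z i0 -> (forall j : 'I_d, (j < i0)%N ==> (z j == 0)) ->
  ~~ F i0 -> inP (signed F).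
Proof.
move=> z_i0 z_lt_i0 F_i0; apply/andP; split.
  by rewrite (primitive_perm (s := id) (x := z)) //; [case/andP: z_inP | apply: abs_signed].
apply/existsP; exists i0; rewrite ffunE (negbTE F_i0) mul1r gtz0_abs // z_i0 /=.
apply/forallP => j; apply/implyP => /(implyP (z_lt_i0 j)) /eqP z_j.
by rewrite ffunE z_j mulr0.
Qed.

Lemma signed1_full_orbit t i w : [&& i != t, w != t & w != i] ->
    z t != 0 -> z i != 0 -> z w != 0 ->
  forall e, (0 < e < d)%N -> iter e (@tau d) (signed (pred1 t)) != signed (pred1 t).
Proof.
move=> /and3P[it wt wi] z_t z_i z_w e /andP[e_gt0 lt_ed]; apply/eqP => y_fix.
set y := signed (pred1 t) in y_fix.
have [b tau_b] := tau_iterE e y.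
have yE j : y j = (-1) ^+ b * y (ord_predn e j) by rewrite -tau_b y_fix.
have y_neg j : y j < 0 -> j = t.
  by rewrite ffunE /=; case: eqP => // _; rewrite mul1r ltNge.
have y_pos j : j != t -> z j != 0 -> 0 < y j.
  by move=> jt z_j; rewrite ffunE /= (negbTE jt) mul1r ltz_nat absz_gt0.
have moved (j : 'I_d) : ord_predn e j != j by rewrite ord_predn_neq ?e_gt0.
(* [y] has exactly one negative coordinate, [-y] at least two. *)
case: b {tau_b} yE => yE.
  have to_t j : j != t -> z j != 0 -> ord_predn e j = t.
    by move=> jt z_j; apply: y_neg; move: (y_pos j jt z_j); rewrite yE mulN1r oppr_gt0.
  move/eqP: (to_t w wt z_w); rewrite -(to_t i it z_i).
  by rewrite (inj_eq (@ord_predn_inj _ _)) (negbTE wi).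
have t_neg : y t < 0 by rewrite ffunE /= eqxx mulN1r oppr_lt0 ltz_nat absz_gt0.
by move: t_neg (moved t); rewrite yE expr0 mul1r => /y_neg ->; rewrite eqxx.
Qed.

Lemma z_predn_neq0 i : z i != 0 -> z (ord_predn p i) != 0.
Proof. by rewrite -!absz_eq0 abs_z_predn. Qed.

Lemma two_point_seeds i0 : 0 < z i0 -> (forall j : 'I_d, (j < i0)%N ==> (z j == 0)) ->
    (p < d)%N -> (forall w, z w != 0 -> w = i0 \/ w = ord_predn p i0) ->
  exists Y, block_seeds Y.
Proof.
move=> z_i0 z_lt_i0 lt_pd supp; set t := ord_predn p i0 in supp.
have lt_0d : (0 < d)%N by apply: leq_ltn_trans lt_pd.
have t_i0 : t != i0 by rewrite ord_predn_neq ?p_gt0.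
have z_t : z t != 0 by apply: z_predn_neq0; rewrite gt_eqF.
(* The support {i0, t} is stable under the shift by p, so shifting twice fixes i0. *)
have r_le2 : (r <= 2)%N.
  have t_moved : ord_predn p t != t by rewrite ord_predn_neq ?p_gt0.
  case: (supp _ (z_predn_neq0 z_t)) => [pt_i0 | pt_t]; last by rewrite pt_t eqxx in t_moved.
  rewrite -(leq_pmul2l p_gt0) pr_d leqNgt; apply/negP => lt_d2p.
  have lt_2p : (p + p < d)%N by lia.
  have := @ord_predn_eq d (p + p) 0%N i0 lt_2p lt_0d.
  by rewrite ord_prednD pt_i0 => /(_ erefl); lia.
exists (fun j : 'I_r => signed [pred i | (i == t) && (j != 0%N :> nat)]); split.
- by move=> j; apply: (inP_signed z_i0 z_lt_i0); rewrite /= eq_sym (negbTE t_i0).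
- by move=> j i; apply: abs_signed.
move=> j j' e lt_ep E; have lt_ed := ltn_trans lt_ep lt_pd.
have e0 : e = 0%N.
  have : z (ord_predn e i0) != 0.
    move/(congr1 (fun y : pt d => `|y i0|%N)): E; rewrite /= abs_tau_iter !abs_signed.
    by rewrite -!absz_eq0 => <-; rewrite absz_eq0 gt_eqF.
  case/supp => [E0 | Ep]; first exact: (@ord_predn_eq d e 0%N i0 lt_ed lt_0d E0).
  by have := @ord_predn_eq d e p i0 lt_ed lt_pd Ep; lia.
split=> //; move/(congr1 (fun y : pt d => y t)): E; rewrite e0 /= !ffunE /= eqxx /=.
have abs_t : `|z t|%:Z != 0 by rewrite eqz_nat absz_eq0.
move/(mulIf abs_t)/signr_inj => sign_jj'; apply/val_inj.
move: sign_jj' (ltn_ord j) (ltn_ord j') r_le2 => /=; lia.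
Qed.

Lemma exists_block_seeds : exists Y, block_seeds Y.
Proof.
have /andP[_ /existsP[i0 /andP[z_i0 /forallP z_lt_i0]]] := z_inP.
have lt_0d : (0 < d)%N by apply: leq_ltn_trans (ltn_ord i0).
have le_pd : (p <= d)%N.
  by rewrite -pr_d leq_pmulr // lt0n; apply: contraTneq lt_0d => r0; rewrite -pr_d r0 muln0.
have [p_d | lt_pd] : p = d \/ (p < d)%N by lia.
  by apply: (full_orbit_seeds z_inP) => // e; rewrite -{1}p_d; apply: p_min.
set t := ord_predn p i0; have t_i0 : t != i0 by rewrite ord_predn_neq ?p_gt0.
have z_t : z t != 0 by apply: z_predn_neq0; rewrite gt_eqF.
case: (boolP [exists w, [&& w != i0, w != t & z w != 0]]).
  case/existsP=> w /and3P[w_i0 w_t z_w].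
  apply: (full_orbit_seeds (y := signed (pred1 t))).
  - by apply: (inP_signed z_i0 z_lt_i0); rewrite /= eq_sym.
  - exact: abs_signed.
  apply: (signed1_full_orbit (i := i0) _ z_t _ z_w); last by rewrite gt_eqF.
  by rewrite eq_sym t_i0 w_i0 w_t.
move=> no_third; apply: (two_point_seeds z_i0 z_lt_i0 lt_pd) => w z_w.
move/existsPn: no_third => /(_ w); rewrite z_w andbT negb_and !negbK.
by case/orP => /eqP; auto.
Qed.

Hypothesis orbit_z : Corbit z = [fset iter k (@tau d) z | k in iota 0 p]%fset.

Lemma orbit_inj : {in iota 0 p &, injective (fun k => iter k (@tau d) z)}.
Proof. by move=> k m; rewrite !mem_iota /= !add0n; apply: iter_period_inj. Qed.

Lemma card_orbit : #|` Corbit z|%fset = p.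
Proof.
by rewrite orbit_z card_in_imfset /= ?undup_id ?iota_uniq ?size_iota //; apply: orbit_inj.
Qed.

Lemma kappa_orbit i : kappa (Corbit z) = col_sum i.
Proof.
have col_orbit j : (\sum_(x <- Corbit z) `|x j|)%N = col_sum j.
  rewrite orbit_z big_imfset /=; last exact: orbit_inj.
  rewrite undup_id ?iota_uniq // -(subn0 p) -/(index_iota 0 p) big_mkord.
  by apply: eq_bigr => k _; rewrite abs_tau_iter.
apply/eqP; rewrite eqn_leq; apply/andP; split.
  by apply/bigmax_leqP => j _; rewrite col_orbit (col_sum_const j i).
by rewrite -col_orbit; apply: (leq_bigmax i).
Qed.

End BlockSeeds.

Unset Implicit Arguments.
Local Open Scope fset_scope.

Theorem proposition6p1 (d : nat) (hd : (0 < d)%N) (z : pt d) (hz : inP z) :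
  exists (K : {fset pt d}) (P : {fset {fset pt d}}),
    #|` K| = d /\
    (forall x, x \in K -> inP x /\ norm1 x = norm1 z) /\
    (* P is a partition of K *)
    (forall x, x \in K <-> exists2 L, L \in P & x \in L) /\
    (forall L, L \in P -> L `<=` K) /\
    (forall L1 L2, L1 \in P -> L2 \in P -> L1 != L2 -> L1 `&` L2 = fset0) /\
    #|` P| = (d %/ #|` Corbit z|)%N /\
        (forall L, L \in P ->
           [/\ #|` L| = #|` Corbit z|,
               (forall i : 'I_d, kappa (Corbit z) = \sum_(x <- L) absz (x i)) &
               exists y : pt d, inP y /\ L `<=` Corbit y]).
Proof.
have [p p_dvd [p_gt0 z_p p_min orbit_z]] := iter_min_period hd (iter_tau_d hz).
rewrite (card_orbit z_p p_min orbit_z); set r := (d %/ p)%N.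
have pr_d : (p * r = d)%N by rewrite mulnC divnK.
have [Y [Y_inP Y_abs Y_sep]] := exists_block_seeds hz p_gt0 pr_d z_p p_min.
set x := fun jk : 'I_r * 'I_p => iter jk.2 (@tau d) (Y jk.1).
have x_inj : injective x := iter_tau_seeds_inj Y_inP Y_sep.
exists (grid x), (grid_rows x); split.
  by rewrite (card_grid x_inj) (card_ord r) (card_ord p) mulnC.
split.
  move=> _ /imfsetP[[j k] _ ->]; split; first exact: inP_iter_tau.
  by apply: (norm1_perm (@ord_predn_inj d k)) => i; rewrite abs_tau_iter Y_abs.
do 3 (split; first by [apply: mem_grid | apply: grid_rows_sub | apply: grid_rows_disjoint]).
split; first by rewrite (card_grid_rows x_inj (Ordinal p_gt0)) (card_ord r).
move=> _ /imfsetP[j _ ->]; split.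
- by rewrite (card_grid_row x_inj) (card_ord p).
- move=> i; rewrite big_grid_row // (kappa_orbit z_p p_min orbit_z i).
  by apply: eq_bigr => k _; rewrite abs_tau_iter Y_abs.
exists (Y j); split=> //; apply/fsubsetP => _ /imfsetP[k _ ->].
by apply/imfsetP; exists (val k); rewrite // mem_iota /= (leq_trans (ltn_ord k)) // dvdn_leq.
Qed.
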